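(* For $n\ge 2$, the number of interval-closed sets of $[2]\times[n]$ is \[|\mathcal{IC}([2]\times[n])|=1+2\left(\binom n2+n\right)+\frac{n+1}{2}\binom{n+2}{3}.\] Here $1$ counts the empty set, $2(\binom n2+n)$ counts the nonempty interval-closed sets contained entirely in the chain $\{(1,i)\}$ or entirely in the chain $\{(2,i)\}$, and $\frac{n+1}{2}\binom{n+2}{3}$ counts those meeting both chains.
   Context: $[n]$ is the chain $1<\cdots<n$; $[2]\times[n]$ is the Cartesian product poset with $(a,b)\le(c,d)$ iff $a\le c$ and $b\le d$. A subset $I$ of a poset is interval-closed if for all $x,y\in I$ and $z$ with $x\le z\le y$ we have $z\in I$; $\mathcal{IC}(P)$ is the set of interval-closed subsets. *)

From mathcomp Require Import all_boot all_order all_algebra.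
Set Implicit Arguments. Unset Strict Implicit. Unset Printing Implicit Defensive.

(* The poset [2] x [n]: elements are pairs (a,b) with a : 'I_2, b : 'I_n
   (0-indexed; (a,b) stands for (a+1,b+1)), ordered componentwise. *)
Definition le2n (n : nat) (x y : 'I_2 * 'I_n) : bool :=
  ((x.1 : nat) <= y.1) && ((x.2 : nat) <= y.2).

Definition interval_closed (n : nat) (I : {set 'I_2 * 'I_n}) : bool :=
  [forall x in I, forall y in I, forall z,
     (le2n x z && le2n z y) ==> (z \in I)].

Definition IC2n (n : nat) : {set {set 'I_2 * 'I_n}} :=
  [set I | interval_closed I].

From mathcomp Require Import all_boot all_order all_algebra.
From mathcomp Require Import zify.
Import GRing.Theory Num.Theory.
Set Implicit Arguments. Unset Strict Implicit. Unset Printing Implicit Defensive.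

(* A subset I of [2] x [n] is described by its two rows
   R0 = {k | (0,k) \in I} and R1 = {k | (1,k) \in I}.  If I is interval-closed,
   each row is convex in the chain [n], hence empty or an interval; and when
   R0 = [a,b] and R1 = [c,d] are both nonempty, then c <= a and d <= b (for
   a <= d, closing (0,a) <= . <= (1,d) puts (1,a) and (0,d) into I; for d < a
   it is automatic).  Conversely every such pair of rows is interval-closed.
   This gives a bijection between IC([2] x [n]) and the "admissible" pairs of
   optional intervals, so
     |IC([2] x [n])| = 1 + 2 T + Q,
   with T = #{a <= b < n} = C(n,2) + n the number of intervals of [n] and
   Q = #{(a,b,c,d) | c <= a <= b < n, c <= d <= b} the number of nested pairs.
   Grouping Q by (b,c) gives Q = sum_(b<n) sum_(j<=b+1) j^2, whence
   12 Q = n (n+1)^2 (n+2) = 2 (n+1) * 6 C(n+2,3). *)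

Section RowDescription.
Variable n : nat.

Definition segment := ('I_n * 'I_n)%type.

Definition in_row (r : option segment) (k : nat) : bool :=
  if r is Some iv then (iv.1 <= k <= iv.2)%N else false.

Definition proper_row (r : option segment) : bool :=
  if r is Some iv then (iv.1 <= iv.2)%N else true.

Definition nested_rows (r0 r1 : option segment) : bool :=
  match r0, r1 with
  | Some iv, Some jv => ((jv.1 <= iv.1) && (jv.2 <= iv.2))%N
  | _, _ => true
  end.

Definition admissible (p : option segment * option segment) : bool :=
  [&& proper_row p.1, proper_row p.2 & nested_rows p.1 p.2].

Definition rows_set (p : option segment * option segment) : {set 'I_2 * 'I_n} :=
  [set x : 'I_2 * 'I_n | in_row (if (x.1 : nat) == 0%N then p.1 else p.2) x.2].

Lemma in_row_inj (r1 r2 : option segment) : proper_row r1 -> proper_row r2 ->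
  (forall k : 'I_n, in_row r1 k = in_row r2 k) -> r1 = r2.
Proof.
case: r1 => [[a b]|]; case: r2 => [[c d]|] //= hab hcd E.
- have ac : a = c.
    by apply: val_inj; move: (E a) (E c) => /=; rewrite hab hcd !leqnn; lia.
  have bd : b = d.
    by apply: val_inj; move: (E b) (E d) => /=; rewrite hab hcd !leqnn; lia.
  by rewrite ac bd.
- by move: (E a) => /=; rewrite leqnn hab.
- by move: (E c) => /=; rewrite leqnn hcd.
Qed.

Lemma rows_set_inj : {in [set p | admissible p] &, injective rows_set}.
Proof.
move=> [p0 p1] [q0 q1]; rewrite !inE => /and3P[wp0 wp1 _] /and3P[wq0 wq1 _] E.
have row r k : (r, k) \in rows_set (p0, p1) = ((r, k) \in rows_set (q0, q1)).
  by rewrite E.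
congr pair; apply: in_row_inj => // k.
- by move: (row ord0 k); rewrite !inE.
- by move: (row ord_max k); rewrite !inE.
Qed.

Lemma rows_set_interval_closed p : admissible p -> interval_closed (rows_set p).
Proof.
case: p => [r0 r1]; rewrite /admissible /= => /and3P[w0 w1 nest].
apply/forall_inP => x; rewrite inE => xI; apply/forall_inP => y; rewrite inE => yI.
apply/forallP => z; apply/implyP; rewrite /le2n inE.
move: x y z xI yI => [[x1 hx1] x2] [[y1 hy1] y2] [[z1 hz1] z2] /=.
case: r0 w0 nest => [[a b]|]; case: r1 w1 => [[c d]|] /=;
 (case: x1 hx1 => [|[|?]] //= _; case: y1 hy1 => [|[|?]] //= _;
  case: z1 hz1 => [|[|?]] //= _); lia.
Qed.

(* Any convex predicate on the chain 'I_n is the membership of a proper row: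
   the segment between its least and its greatest element. *)
Lemma convex_row (P : pred 'I_n) :
  (forall i j k : 'I_n, P i -> P j -> (i <= k <= j)%N -> P k) ->
  exists2 r, proper_row r & forall k : 'I_n, P k = in_row r k.
Proof.
move=> convP; case: (pickP P) => [k0 Pk0 | P0]; last first.
  by exists None => // k; rewrite P0.
have [a Pa a_min] := arg_minnP (fun k : 'I_n => (k : nat)) Pk0.
have [b Pb b_max] := arg_maxnP (fun k : 'I_n => (k : nat)) Pk0.
exists (Some (a, b)); first exact: a_min.
move=> k /=; apply/idP/idP => [Pk | /(convP a b k Pa Pb)//].
by rewrite (a_min k Pk); apply: b_max.
Qed.

Lemma interval_closedP {I : {set 'I_2 * 'I_n}} {x y z : 'I_2 * 'I_n} :
  interval_closed I ->
  x \in I -> y \in I -> le2n x z -> le2n z y -> z \in I.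
Proof.
move=> /forall_inP IC xI yI xz zy.
by move: (IC x xI) => /forall_inP /(_ y yI) /forallP /(_ z); rewrite xz zy.
Qed.

Lemma interval_closed_rows_set (I : {set 'I_2 * 'I_n}) : interval_closed I ->
  exists2 p, admissible p & I = rows_set p.
Proof.
move=> IC.
have convex (r : 'I_2) : forall i j k : 'I_n,
    (r, i) \in I -> (r, j) \in I -> (i <= k <= j)%N -> (r, k) \in I.
  move=> i j k iI jI /andP[ik kj].
  by apply: (interval_closedP IC iI jI); rewrite /le2n /= leqnn.
have [r0 w0 row0] := @convex_row (fun k => (ord0, k) \in I) (convex _).
have [r1 w1 row1] := @convex_row (fun k => (ord_max, k) \in I) (convex _).
have -> : I = rows_set (r0, r1).
  apply/setP => -[[[|[|?]] hr] k] //; rewrite inE /=.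
  - by rewrite -row0; congr (_ \in I); congr pair; apply: val_inj.
  - by rewrite -row1; congr (_ \in I); congr pair; apply: val_inj.
exists (r0, r1) => //; rewrite /admissible /= w0 w1 /=.
case: r0 w0 row0 => [[a b]|] //; case: r1 w1 row1 => [[c d]|] //= cd row1 ab row0.
have [ad | da] := leqP a d; last by apply/andP; split; lia.
(* Between (0,a) and (1,d) lie both (1,a) and (0,d). *)
have aI : (ord0, a) \in I by rewrite row0 /= leqnn ab.
have dI : (ord_max, d) \in I by rewrite row1 /= leqnn cd.
have a1I : (ord_max, a) \in I.
  by apply: (interval_closedP IC aI dI); rewrite /le2n /= ?leqnn ?ad.
have d0I : (ord0, d) \in I.
  by apply: (interval_closedP IC aI dI); rewrite /le2n /= ?leqnn ?ad.
move: a1I d0I; rewrite row0 row1 /=.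
by move=> /andP[-> _] /andP[_ ->].
Qed.

Lemma card_IC2n : #|IC2n n| = #|[set p | admissible p]|.
Proof.
rewrite -(card_in_imset rows_set_inj); apply: eq_card => I.
rewrite inE; apply/idP/imsetP => [/interval_closed_rows_set [p pA ->] | [p]].
  by exists p; rewrite ?inE.
by rewrite inE => pA ->; apply: rows_set_interval_closed.
Qed.

End RowDescription.

Lemma sum_option (T : finType) (F : option T -> nat) :
  \sum_(o : option T) F o = F None + \sum_(x : T) F (Some x).
Proof.
rewrite (bigD1 None) //=; congr (_ + _).
rewrite (reindex_omap Some id) //=; last by case.
by apply: eq_bigl => x; rewrite eqxx.
Qed.

Definition intervals_count (n : nat) : nat :=
  \sum_(a < n) \sum_(b < n) (a <= b : nat).

Definition nested_count (n : nat) : nat :=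
  \sum_(a < n) \sum_(b < n) \sum_(c < n) \sum_(d < n)
    ([&& a <= b, c <= d, c <= a & d <= b] : nat).

(* Splitting admissible pairs by which rows are empty. *)
Lemma card_admissible n :
  #|[set p | @admissible n p]| = 1 + 2 * intervals_count n + nested_count n.
Proof.
have -> : #|[set p | @admissible n p]| =
    \sum_(r0 : option (segment n)) \sum_r1 (admissible (r0, r1) : nat).
  rewrite pair_bigA -sum1_card big_mkcond /=.
  by apply: eq_bigr => -[r0 r1] _; rewrite inE; case: admissible.
have one_row : \sum_(iv : segment n) (proper_row (Some iv) : nat) = intervals_count n.
  by rewrite /intervals_count pair_bigA.
under eq_bigr do rewrite sum_option.
rewrite sum_option big_split.
have -> : \sum_(iv : segment n) (admissible (None, Some iv) : nat) = intervals_count n.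
  by rewrite -one_row; apply: eq_bigr => iv _; rewrite /admissible /= andbT.
have -> : \sum_(iv : segment n) \sum_jv (admissible (Some iv, Some jv) : nat) =
          nested_count n.
  rewrite /nested_count [RHS]pair_bigA; apply: eq_bigr => -[a b] _ /=.
  rewrite [RHS]pair_bigA; apply: eq_bigr => -[c d] _ /=.
  by rewrite /admissible /=; case: (a <= b)%N; case: (c <= d)%N.
rewrite /=; lia.
Qed.

Lemma count_between n c b : \sum_(d < n) (c <= d <= b : nat) = minn b.+1 n - c.
Proof.
elim: n => [|n IH]; first by rewrite big_ord0 minn0.
rewrite big_ord_recr /= IH; case: (leqP c n) => cn; case: (leqP n b) => nb /=; lia.
Qed.

Lemma count_ge n a : \sum_(b < n) (a <= b : nat) = n - a.
Proof.
have -> : n - a = minn n.+1 n - a by rewrite (minn_idPr (leqnSn n)).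
rewrite -count_between.
by apply: eq_bigr => b _; rewrite (ltnW (ltn_ord b)) andbT.
Qed.

Lemma count_intervals n : intervals_count n = 'C(n, 2) + n.
Proof.
rewrite /intervals_count (eq_bigr (fun a : 'I_n => n - a)) => [|a _]; last first.
  exact: count_ge.
rewrite (reindex_inj rev_ord_inj) /=.
rewrite (eq_bigr (fun a : 'I_n => a + 1)) => [|a _]; last first.
  by have := ltn_ord a; lia.
by rewrite big_split /= sum_nat_const card_ord muln1 -bin2_sum big_mkord.
Qed.

Definition sum_squares (m : nat) : nat := \sum_(k < m) (m - k) ^ 2.

Lemma sum_squares_pad m k : \sum_(c < m + k) (m - c) ^ 2 = sum_squares m.
Proof.
elim: k => [|k IH]; first by rewrite addn0.
by rewrite addnS big_ord_recr /= IH subnDA subnn sub0n addn0.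
Qed.

Lemma sum_squares_closed m : 6 * sum_squares m = m * m.+1 * (2 * m + 1).
Proof.
rewrite /sum_squares; elim: m => [|m IH]; first by rewrite big_ord0.
rewrite big_ord_recl /= subn0.
under eq_bigr do rewrite /bump /= add1n subSS.
rewrite mulnDr IH; lia.
Qed.

(* Grouping the nested pairs by (b, c): both a and d range over [c, b]. *)
Lemma nested_count_squares n : nested_count n = \sum_(b < n) sum_squares b.+1.
Proof.
have between (b : 'I_n) c : \sum_(d < n) (c <= d <= b : nat) = b.+1 - c.
  by rewrite count_between (minn_idPl (ltn_ord b)).
transitivity (\sum_(b < n) \sum_(c < n)
    (\sum_(a < n) (c <= a <= b : nat)) * (\sum_(d < n) (c <= d <= b : nat))).
  rewrite /nested_count exchange_big; apply: eq_bigr => b _.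
  rewrite exchange_big; apply: eq_bigr => c _.
  rewrite big_distrl; apply: eq_bigr => a _.
  rewrite big_distrr; apply: eq_bigr => d _.
  by case: (a <= b)%N; case: (c <= d)%N; case: (c <= a)%N; case: (d <= b)%N.
apply: eq_bigr => b _.
rewrite -(sum_squares_pad b.+1 (n - b.+1)) (subnKC (ltn_ord b)).
by apply: eq_bigr => c _; rewrite !between mulnn.
Qed.

Lemma binom3 n : 6 * 'C(n + 2, 3) = (n + 2) * (n + 1) * n.
Proof.
have := bin_ffact n.+2 3; rewrite !ffactnS ffactn0 addn2 (_ : 3`! = 6) //=; lia.
Qed.

Lemma nested_count_closed n : 2 * nested_count n = (n + 1) * 'C(n + 2, 3).
Proof.
have sum12 : 12 * \sum_(b < n) sum_squares b.+1 = n * n.+1 * n.+1 * n.+2.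
  elim: n => [|n IH]; first by rewrite big_ord0.
  by rewrite big_ord_recr /= mulnDr IH; have := sum_squares_closed n.+1; lia.
rewrite nested_count_squares; have := binom3 n; nia.
Qed.

Local Open Scope ring_scope.

Theorem theorem4p2 (n : nat) (hn : (2 <= n)%N) :
  (#|IC2n n|)%:R =
    1 + 2 * ('C(n, 2) + n)%:R + ((n + 1)%:R / 2) * ('C(n + 2, 3))%:R :> rat.
Proof.
rewrite card_IC2n card_admissible count_intervals.
have -> : (n + 1)%:R / 2 * ('C(n + 2, 3))%:R = (nested_count n)%:R :> rat.
  rewrite mulrAC -natrM -nested_count_closed natrM mulrAC mulfV ?mul1r //.
by rewrite natrD natrD natrM.
Qed.
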